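(* Let $V$ be a vector configuration of rank $r$ containing no copy of the zero vector, with $n=r+d+1$ elements and dual degree $\deg^*(V)=\delta$. Then \[\mathrm{DD}(V)=r-(d+1-2\delta),\qquad \operatorname{rank}(V)+\deg^*(V)=\mathrm{DD}(V)+\operatorname{codeg}^*(V),\qquad |V|=\mathrm{DD}(V)+2\operatorname{codeg}^*(V).\] Moreover, every oriented linear hyperplane $H$ with $|\overline{H}^-\cap V|=\operatorname{codeg}^*(V)$ satisfies $|H^+\cap V|=\mathrm{DD}(V)+\operatorname{codeg}^*(V)$.
   Context: A vector configuration is a finite family (repetitions allowed) $V$ of vectors in $\mathbb{R}^r$; $\operatorname{rank}(V)=\dim\operatorname{lin}(V)$, and cardinalities count multiplicities. For a nonzero linear functional $f$, the oriented linear hyperplane $H=\{f=0\}$ has $H^+=\{f>0\}$, $H^-=\{f<0\}$, $\overline{H}^-=\{f\le0\}$. Dual codegree: $\operatorname{codeg}^*(V)=\min_H|\overline{H}^-\cap V|$; dual degree: $\deg^*(V)=\max_H|H^+\cap V|-\operatorname{rank}(V)$, over oriented linear hyperplanes $H$. Covector discrepancy: $\mathrm{DD}(V)=\max_f\big|\,|\{v: f(v)>0\}|-|\{v:f(v)<0\}|\,\big|$ over all linear functionals $f$. *)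

From HB Require Import structures.
From mathcomp Require Import all_boot all_order all_algebra.
From mathcomp Require Import boolp reals.
Set Implicit Arguments. Unset Strict Implicit. Unset Printing Implicit Defensive.
Import Order.TTheory GRing.Theory Num.Theory.
Local Open Scope ring_scope.

(* A vector configuration of n vectors in R^m is the family of rows of
   V : 'M[R]_(n, m) (repetitions allowed).  A linear functional f on R^m is
   given by a column vector a : 'cV_m, f(v) = v *m a. *)
Section VC.
Variables (R : realType) (n m : nat).
Implicit Types (V : 'M[R]_(n, m)) (a : 'cV[R]_m).

Definition fval V a (i : 'I_n) : R := (row i V *m a) 0 0.

Definition npos V a : nat := #|[set i | 0 < fval V a i]|.
Definition nneg V a : nat := #|[set i | fval V a i < 0]|.
Definition nnonpos V a : nat := #|[set i | fval V a i <= 0]|.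

Definition codeg V : nat :=
  \big[minn/n]_(k < n.+1 | `[< exists2 a, a != 0 & nnonpos V a = k >]) k.

Definition deg V : int :=
  (\max_(k < n.+1 | `[< exists2 a, a != 0 & npos V a = k >]) k)%:Z
  - (\rank V)%:Z.

Definition DD V : nat :=
  \max_(k < n.+1 | `[< exists a, `|(npos V a)%:Z - (nneg V a)%:Z|%N = k >]) k.
End VC.

From HB Require Import structures.
From mathcomp Require Import all_boot all_order all_algebra.
From mathcomp Require Import boolp reals zify lra.
Set Implicit Arguments. Unset Strict Implicit. Unset Printing Implicit Defensive.
Import Order.TTheory GRing.Theory Num.Theory.
Local Open Scope ring_scope.

(* Let P be the largest number of vectors on the positive side of a nonzero
   functional, so that deg = P - r.  The closed negative side is the
   complement of the positive one, hence codeg = n - P.  The heart of the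
   matter is DD = 2P - n.  A functional attaining P has discrepancy at least
   P - (n - P).  Conversely, any functional f can be perturbed into f + e g,
   with g nonzero on a vector where f vanishes and signed so that g is
   positive on at least as many zeros of f as it is negative: for small e
   this loses no discrepancy and strictly shrinks the zero set.  Since V has
   no zero vector, iterating yields a functional vanishing on no vector of V,
   whose discrepancy is 2 npos - n <= 2P - n. *)

Definition for_small_pos (R : realType) (Q : R -> Prop) :=
  exists2 e, 0 < e & forall e', 0 < e' -> e' <= e -> Q e'.

Lemma for_small_pos_sign (R : realType) (x y : R) :
  for_small_pos (fun e => (0 < x -> 0 < x + e * y) /\ (x < 0 -> x + e * y < 0)).
Proof.
have [->|x_neq0] := eqVneq x 0; first by exists 1 => // e _ _; split; lra.
have y1_gt0 : 0 < `|y| + 1 by rewrite ltr_wpDl.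
exists (`|x| / (`|y| + 1)); first by rewrite divr_gt0 ?normr_gt0.
move=> e e_gt0; rewrite ler_pdivlMr // mulrDr mulr1 => e_le.
have ey_small : `|e * y| < `|x| by rewrite normrM (gtr0_norm e_gt0); lra.
have := ler_norm (e * y); have := ler_norm (- (e * y)); rewrite normrN.
split=> x_sgn; move: ey_small; rewrite ?(gtr0_norm x_sgn) ?(ltr0_norm x_sgn); lra.
Qed.

Lemma for_small_pos_forall (R : realType) (I : finType) (Q : I -> R -> Prop) :
  (forall i, for_small_pos (Q i)) -> for_small_pos (fun e => forall i, Q i e).
Proof.
move=> smallQ.
suff [e e_gt0 Qe] : for_small_pos (fun e => forall i, i \in enum I -> Q i e).
  by exists e => // e' e'_gt0 e'_le i; apply: Qe; rewrite ?mem_enum.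
elim: (enum I) => [|i s [e1 e1_gt0 Qe1]]; first by exists 1.
have [e2 e2_gt0 Qe2] := smallQ i.
exists (Order.min e1 e2) => [|e e_gt0]; first by rewrite lt_min e1_gt0.
rewrite le_min => /andP[e_le1 e_le2] k; rewrite inE => /predU1P[->|/Qe1]; auto.
Qed.

Lemma card_set_ord_lt n (A : {set 'I_n}) : (#|A| < n.+1)%N.
Proof. by rewrite ltnS -[n in (_ <= n)%N]card_ord max_card. Qed.

Lemma card_set_sum (T : finType) (P : pred T) :
  #|[set i | P i]| = (\sum_i P i)%N.
Proof. by rewrite -sum1_card big_mkcond; apply: eq_bigr => i _; rewrite inE. Qed.

Section Configuration.
Variables (R : realType) (n m : nat) (V : 'M[R]_(n, m)).
Implicit Types (a b : 'cV[R]_m).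

Lemma fvalD a b i : fval V (a + b) i = fval V a i + fval V b i.
Proof. by rewrite /fval mulmxDr mxE. Qed.

Lemma fvalZ e a i : fval V (e *: a) i = e * fval V a i.
Proof. by rewrite /fval -scalemxAr mxE. Qed.

Lemma fvalN a i : fval V (- a) i = - fval V a i.
Proof. by rewrite /fval mulmxN mxE. Qed.

Lemma fval0 i : fval V 0 i = 0.
Proof. by rewrite /fval mulmx0 mxE. Qed.

Lemma fval_delta j i : fval V (delta_mx j 0) i = V i j.
Proof. by rewrite /fval -colE !mxE. Qed.

Lemma npos_opp a : npos V (- a) = nneg V a.
Proof. by apply: eq_card => i; rewrite !inE fvalN oppr_gt0. Qed.

Lemma nneg_opp a : nneg V (- a) = npos V a.
Proof. by apply: eq_card => i; rewrite !inE fvalN oppr_lt0. Qed.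

Lemma npos_add_nnonpos a : (npos V a + nnonpos V a)%N = n.
Proof.
rewrite -[RHS]card_ord -(cardsC [set i | 0 < fval V a i]) /npos /nnonpos.
by congr (_ + _)%N; apply: eq_card => i; rewrite !inE -leNgt.
Qed.

Lemma nneg_le_nnonpos a : (nneg V a <= nnonpos V a)%N.
Proof. by apply/subset_leq_card/subsetP => i; rewrite !inE => /ltW. Qed.

Lemma nnonpos_nonvanishing a :
  (forall i, fval V a i != 0) -> nnonpos V a = nneg V a.
Proof. by move=> nz; apply: eq_card => i; rewrite !inE le_eqVlt (negbTE (nz i)). Qed.

Definition disc a : int := (npos V a)%:Z - (nneg V a)%:Z.

Lemma disc_opp a : disc (- a) = - disc a.
Proof. by rewrite /disc npos_opp nneg_opp opprB. Qed.

Definition nzero a := #|[set i | fval V a i == 0]|.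
Definition nzero_pos a b := #|[set i | (fval V a i == 0) && (0 < fval V b i)]|.
Definition nzero_neg a b := #|[set i | (fval V a i == 0) && (fval V b i < 0)]|.

Lemma perturb_sign a b : exists2 e, 0 < e & forall i,
  ((0 < fval V (a + e *: b) i) =
     (0 < fval V a i) || (fval V a i == 0) && (0 < fval V b i)) /\
  ((fval V (a + e *: b) i < 0) =
     (fval V a i < 0) || (fval V a i == 0) && (fval V b i < 0)).
Proof.
have [e e_gt0 sgn] := for_small_pos_forall
  (fun i => for_small_pos_sign (fval V a i) (fval V b i)).
exists e => // i; rewrite fvalD fvalZ.
have [keep_pos keep_neg] := sgn e e_gt0 (lexx e) i.
case: (ltgtP (fval V a i) 0) => [a_neg|a_pos|->] /=.
- by rewrite keep_neg //; split=> //; apply/negbTE; rewrite -leNgt ltW ?keep_neg.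
- by rewrite keep_pos //; split=> //; apply/negbTE; rewrite -leNgt ltW ?keep_pos.
- by rewrite add0r pmulr_rgt0 // pmulr_rlt0.
Qed.

Lemma perturb_counts a b : exists e : R,
  [/\ npos V (a + e *: b) = (npos V a + nzero_pos a b)%N,
      nneg V (a + e *: b) = (nneg V a + nzero_neg a b)%N
    & [set i | fval V (a + e *: b) i == 0] \subset
      [set i | (fval V a i == 0) && (fval V b i == 0)]].
Proof.
have [e _ sgn] := perturb_sign a b.
exists e; split.
- rewrite /npos /nzero_pos !card_set_sum -big_split; apply: eq_bigr => i _ /=.
  by rewrite (sgn i).1; case: (ltgtP (fval V a i) 0).
- rewrite /nneg /nzero_neg !card_set_sum -big_split; apply: eq_bigr => i _ /=.
  by rewrite (sgn i).2; case: (ltgtP (fval V a i) 0).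
- apply/subsetP => i; rewrite !inE => /eqP fval_eq0.
  have [] := sgn i; rewrite fval_eq0 ltxx.
  by case: (ltgtP (fval V a i) 0); case: (ltgtP (fval V b i) 0).
Qed.

Lemma perturb_improves a b i0 :
  fval V a i0 = 0 -> fval V b i0 != 0 -> (nzero_neg a b <= nzero_pos a b)%N ->
  exists c, disc a <= disc c /\ (nzero c < nzero a)%N.
Proof.
move=> a_i0 b_i0 balanced; have [e [pos_c neg_c zero_c]] := perturb_counts a b.
exists (a + e *: b); split; first by rewrite /disc pos_c neg_c; lia.
apply: leq_ltn_trans (subset_leq_card zero_c) _; apply: proper_card.
apply/properP; split; first by apply/subsetP => i; rewrite !inE => /andP[].
by exists i0; rewrite !inE a_i0 eqxx // (negbTE b_i0).
Qed.

Lemma nzero_pos_opp a b : nzero_pos a (- b) = nzero_neg a b.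
Proof. by apply: eq_card => i; rewrite !inE fvalN oppr_gt0. Qed.

Lemma nzero_neg_opp a b : nzero_neg a (- b) = nzero_pos a b.
Proof. by apply: eq_card => i; rewrite !inE fvalN oppr_lt0. Qed.

Lemma balanced_direction a i0 : row i0 V != 0 ->
  exists b, fval V b i0 != 0 /\ (nzero_neg a b <= nzero_pos a b)%N.
Proof.
move=> row_neq0; have /existsP[j Vj] : [exists j, V i0 j != 0].
  apply: contraR row_neq0 => /existsPn V_eq0; apply/eqP/rowP => j.
  by rewrite !mxE; apply/eqP/negbNE.
have fval_j : fval V (delta_mx j 0) i0 != 0 by rewrite fval_delta.
case: (leqP (nzero_neg a (delta_mx j 0)) (nzero_pos a (delta_mx j 0))) => [le|/ltnW].
  by exists (delta_mx j 0).
by exists (- delta_mx j 0); rewrite fvalN oppr_eq0 nzero_pos_opp nzero_neg_opp.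
Qed.

Lemma disc_le_nonvanishing a : (forall i, row i V != 0) ->
  exists2 g, (forall i, fval V g i != 0) & disc a <= disc g.
Proof.
move=> rows_neq0; elim: {a}(nzero a).+1 {-2}a (ltnSn (nzero a)) => // k IHk a.
rewrite ltnS => nzero_a.
have [i0 /eqP a_i0|nonvanishing] := pickP (fun i => fval V a i == 0); last first.
  by exists a => // i; rewrite nonvanishing.
have [b [b_i0 balanced]] := balanced_direction a (rows_neq0 i0).
have [c [disc_ac nzero_c]] := perturb_improves a_i0 b_i0 balanced.
have [g g_nz disc_cg] := IHk c (leq_trans nzero_c nzero_a).
by exists g => //; apply: le_trans disc_cg.
Qed.

End Configuration.

Section Extremal.
Variables (R : realType) (n m : nat) (V : 'M[R]_(n, m)).
Implicit Types (a : 'cV[R]_m).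

Definition maxpos : nat :=
  \max_(k < n.+1 | `[< exists2 a, a != 0 & npos V a = k >]) k.

Lemma deg_maxpos : deg V = maxpos%:Z - (\rank V)%:Z.
Proof. by []. Qed.

Lemma maxpos_le : (maxpos <= n)%N.
Proof. by apply/bigmax_leqP => k _; rewrite -ltnS. Qed.

Lemma npos_le_maxpos a : a != 0 -> (npos V a <= maxpos)%N.
Proof.
move=> a_neq0; apply: (@leq_bigmax_cond _ _ _ (Ordinal (card_set_ord_lt _))).
by apply/asboolP; exists a.
Qed.

Lemma maxpos_attained : (0 < maxpos)%N -> exists2 a, a != 0 & npos V a = maxpos.
Proof.
rewrite /maxpos; apply: (big_ind (fun k => (0 < k)%N -> exists2 a, a != 0 & npos V a = k)).
- by [].
- by move=> k l hk hl; rewrite /maxn; case: (ltnP k l).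
- by move=> k /asboolP[a a_neq0 <-]; exists a.
Qed.

Lemma nonvanishing_npos_le_maxpos g :
  (forall i, fval V g i != 0) -> (npos V g <= maxpos)%N.
Proof.
have [-> nz|/npos_le_maxpos//] := eqVneq g 0.
suff -> : npos V 0 = 0%N by [].
by apply/eqP; rewrite cards_eq0; apply/eqP/setP => i; have := nz i; rewrite fval0 eqxx.
Qed.

Lemma codeg_le a : a != 0 -> (codeg V <= nnonpos V a)%N.
Proof.
move=> a_neq0; pose k := Ordinal (card_set_ord_lt [set i | fval V a i <= 0]).
have Pk : `[< exists2 b, b != 0 & nnonpos V b = k >] by apply/asboolP; exists a.
rewrite /codeg; elim: (index_enum _) (mem_index_enum k) => // l s IHs.
rewrite inE big_cons => /predU1P[<-|/IHs]; first by rewrite Pk geq_minl.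
by case: ifP => // _; rewrite geq_min => ->; rewrite orbT.
Qed.

Lemma codeg_maxpos : codeg V = (n - maxpos)%N.
Proof.
apply/eqP; rewrite eqn_leq; apply/andP; split.
  have [->|/maxpos_attained[a a_neq0 npos_a]] := posnP maxpos.
    rewrite subn0 /codeg.
    apply: (big_ind (fun k => k <= n)%N) => // [k l k_le _|k _].
      by rewrite geq_min k_le.
    by rewrite -ltnS.
  by have := npos_add_nnonpos V a; have := codeg_le a_neq0; lia.
rewrite /codeg; apply: (big_ind (fun k => n - maxpos <= k)%N) => //.
- exact: leq_subr.
- by move=> k l; rewrite leq_min => ->.
- move=> k /asboolP[a a_neq0 <-].
  by have := npos_add_nnonpos V a; have := npos_le_maxpos a_neq0; lia.
Qed.

Hypothesis rows_neq0 : forall i, row i V != 0.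

Lemma disc_le_maxpos a : disc V a <= (2 * maxpos)%:Z - n%:Z.
Proof.
have [g g_nz disc_ag] := disc_le_nonvanishing a rows_neq0.
have := npos_add_nnonpos V g; rewrite nnonpos_nonvanishing //.
have := nonvanishing_npos_le_maxpos g_nz; move: disc_ag; rewrite /disc; lia.
Qed.

Lemma maxpos_ge_half : (n <= 2 * maxpos)%N.
Proof.
have disc0 : disc V 0 = 0 by have := disc_opp V 0; rewrite oppr0; lra.
by have := disc_le_maxpos 0; rewrite disc0; lia.
Qed.

Lemma DD_maxpos : DD V = (2 * maxpos - n)%N.
Proof.
apply/eqP; rewrite eqn_leq; apply/andP; split.
  apply/bigmax_leqP => k /asboolP[a <-].
  by have := disc_le_maxpos a; have := disc_le_maxpos (- a); rewrite disc_opp /disc; lia.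
have [->|/maxpos_attained[a a_neq0 npos_a]] := posnP maxpos; first by rewrite muln0.
have DD_a : (`|disc V a|%N <= DD V)%N.
  have disc_lt : (`|disc V a|%N < n.+1)%N.
    have := npos_add_nnonpos V a; have := nneg_le_nnonpos V a; rewrite /disc; lia.
  by apply: (@leq_bigmax_cond _ _ _ (Ordinal disc_lt)); apply/asboolP; exists a.
have := npos_add_nnonpos V a; have := nneg_le_nnonpos V a.
by move: DD_a; rewrite /disc npos_a; lia.
Qed.

End Extremal.

Theorem mainTheorem7 (R : realType) (n m r : nat) (V : 'M[R]_(n, m))
    (d delta : int) :
  \rank V = r ->
  (forall i : 'I_n, row i V != 0) ->
  (n%:Z = r%:Z + d + 1) ->
  deg V = delta ->
  [/\ (DD V)%:Z = r%:Z - (d + 1 - 2 * delta),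
      r%:Z + deg V = (DD V)%:Z + (codeg V)%:Z,
      n = (DD V + 2 * codeg V)%N
    & forall a : 'cV[R]_m, a != 0 -> nnonpos V a = codeg V ->
        npos V a = (DD V + codeg V)%N].
Proof.
move=> rankV rows_neq0 n_eq <-.
have := maxpos_le V; have := maxpos_ge_half rows_neq0.
rewrite deg_maxpos rankV (DD_maxpos rows_neq0) codeg_maxpos => half_le le_n.
split; [lia | lia | lia |].
by move=> a _ nnonpos_a; have := npos_add_nnonpos V a; lia.
Qed.
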